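(* Consider an ROS system with $n$ bidders in the smooth limit, and let $\phi$ be the flow of the differential equation $\frac{dm_i}{dt}=U_i(m)$, $i=1,\dots,n$. Then the set $[1,\infty)^n\subset\mathbb R^n$ is positively invariant with respect to $\phi$, i.e. $\phi(t,[1,\infty)^n)\subseteq[1,\infty)^n$ for all $t\ge 0$.
   Context: ROS system: $n$ bidders, $k$ items; bidder $i$ uses multiplier $m_i$ and bids $b_{ij}=m_iv_{ij}$ on item $j$. Each item is sold by a second-price auction with uniform random tie-breaking: the highest bid wins (ties split uniformly), allocation $x_{ij}\in[0,1]$ is the winning probability and payment $p_{ij}=x_{ij}\max_{s\ne i}b_{sj}$. Smooth limit: the valuation vector $v=(v_{ij})$ is random with a positive $C^1$ density on a box $[0,M]^{nk}$ and $U_i(m)=\mathbb E[\sum_j v_{ij}x_{ij}(m)-p_{ij}(m)]$, which is a $C^1$ function of $m$. A set $S$ is positively invariant for a flow $\phi$ if $\phi(t,S)\subseteq S$ for all $t\ge 0$. *)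

From HB Require Import structures.
From mathcomp Require Import all_boot all_order all_algebra.
From mathcomp Require Import all_classical all_reals all_analysis.
Set Implicit Arguments. Unset Strict Implicit. Unset Printing Implicit Defensive.
Import Order.TTheory GRing.Theory Num.Theory.
Import numFieldNormedType.Exports.
Local Open Scope classical_set_scope.
Local Open Scope ring_scope.

Section ROS.
Variables (R : realType) (n k : nat).

(* multiplier profile m : 'I_n -> R ; valuation profile v : 'M[R]_(n,k) *)

Definition bid (m : 'I_n -> R) (v : 'M[R]_(n, k)) (i : 'I_n) (j : 'I_k) : R :=
  m i * v i j.

(* highest competing bid max_{s <> i} b_{sj} (0 if there is no competitor) *)
Definition max_other (m : 'I_n -> R) (v : 'M[R]_(n, k)) (i : 'I_n) (j : 'I_k) : R :=
  \big[Num.max/0]_(s | s != i) bid m v s j.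

Definition is_winner (m : 'I_n -> R) (v : 'M[R]_(n, k)) (i : 'I_n) (j : 'I_k) : bool :=
  [forall s, bid m v s j <= bid m v i j].

(* allocation with uniform random tie-breaking: winning probability *)
Definition alloc (m : 'I_n -> R) (v : 'M[R]_(n, k)) (i : 'I_n) (j : 'I_k) : R :=
  if is_winner m v i j
  then (#|[set s | is_winner m v s j]|%:R)^-1 else 0.

Definition payment (m : 'I_n -> R) (v : 'M[R]_(n, k)) (i : 'I_n) (j : 'I_k) : R :=
  alloc m v i j * max_other m v i j.

Definition realized_utility (m : 'I_n -> R) (v : 'M[R]_(n, k)) (i : 'I_n) : R :=
  \sum_(j < k) (v i j * alloc m v i j - payment m v i j).

Definition upd_entry (v : 'M[R]_(n, k)) (ab : 'I_n * 'I_k) (x : R) : 'M[R]_(n, k) :=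
  \matrix_(a, b) if (a, b) == ab then x else v a b.

Fixpoint iter_integral (M : R) (s : seq ('I_n * 'I_k))
    (F : 'M[R]_(n, k) -> R) (v : 'M[R]_(n, k)) : R :=
  match s with
  | [::] => F v
  | ab :: s' =>
      Rintegral lebesgue_measure `[0, M]%classic
        (fun x => iter_integral M s' F (upd_entry v ab x))
  end.

Definition box_integral (M : R) (F : 'M[R]_(n, k) -> R) : R :=
  iter_integral M (enum [set: 'I_n * 'I_k]) F 0.

(* f is a probability density on [0,M]^{nk} that is positive and C^1 there
   (f is C^1 on all of R^{nk}: all partial derivatives exist and are continuous) *)
Definition positive_C1_density (M : R) (f : 'M[R]_(n, k) -> R) : Prop :=
  [/\ forall v : 'M[R]_(n, k), (forall i j, 0 <= v i j <= M) -> 0 < f v,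
      forall (i : 'I_n) (j : 'I_k) (v : 'M[R]_(n, k)),
        derivable f v (delta_mx i j),
      forall (i : 'I_n) (j : 'I_k),
        continuous (fun v : 'M[R]_(n, k) => 'D_(delta_mx i j) f v)
    & box_integral M f = 1].

Definition exp_utility (M : R) (f : 'M[R]_(n, k) -> R) (m : 'I_n -> R) (i : 'I_n) : R :=
  box_integral M (fun v => realized_utility m v i * f v).

Definition ge1_orthant : set ('I_n -> R) := [set x | forall i, 1 <= x i].

End ROS.

(** A bidder whose multiplier is at most 1 never bids above her value, so
    whenever she wins an item the second-highest bid she pays is at most her
    value: her realized utility, and hence her expected utility [U_i(m)], is
    nonnegative. Along the flow, a coordinate [m_i] can therefore only
    increase while it lies below 1, and a barrier argument at the last time
    it was [>= 1] shows that it never drops below 1. *)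

From HB Require Import structures.
From mathcomp Require Import all_boot all_order all_algebra.
From mathcomp Require Import all_classical all_reals all_analysis.
Set Implicit Arguments. Unset Strict Implicit. Unset Printing Implicit Defensive.
Import Order.TTheory GRing.Theory Num.Theory.
Import numFieldNormedType.Exports.
Local Open Scope classical_set_scope.
Local Open Scope ring_scope.

Section Barrier.
Variables (R : realType) (g : R -> R) (c : R).
Hypothesis g_cvg0 : g @ 0^'+ --> g 0.
Hypothesis g_derivable : forall s, 0 < s -> derivable g s 1.
Hypothesis g_derive_ge0 : forall s, 0 < s -> g s < c -> 0 <= derive1 g s.

Let g_cont (s : R) : 0 < s -> g @ s --> g s.
Proof.
move=> s0; apply/differentiable_continuous.
by rewrite -derivable1_diffP; exact: g_derivable.
Qed.

Let g_cvg_right (s : R) : 0 <= s -> g @ s^'+ --> g s.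
Proof.
rewrite le_eqVlt => /orP[/eqP<- // | s0].
exact/cvg_at_right_filter/g_cont.
Qed.

Lemma barrier_nondecr (a b : R) : 0 < a -> a <= b ->
  (forall u, a <= u <= b -> g u < c) -> g a <= g b.
Proof.
move=> a0 ab below.
have lt0 u : u \in `]a, b[ -> 0 < u by rewrite in_itv => /andP[/(lt_trans a0)].
apply: (@ger0_derive1_ndecr _ g a b) => //.
- by move=> u /lt0; exact: g_derivable.
- move=> u uab; apply: g_derive_ge0; first exact: lt0.
  by move: uab; rewrite in_itv => /andP[au ub]; apply: below; rewrite !ltW.
- apply: derivable_within_continuous => u; rewrite in_itv => /andP[au _].
  exact/g_derivable/(lt_le_trans a0).
Qed.

Lemma barrier_last_time (t : R) : 0 <= t -> c <= g 0 -> g t < c ->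
  exists s0, [/\ 0 <= s0 < t, c <= g s0 & forall s, s0 < s <= t -> g s < c].
Proof.
move=> t0 gc0 gtc.
pose A := [set s | 0 <= s <= t /\ c <= g s].
have A0 : A 0 by split; rewrite ?lexx ?t0.
have supA : has_sup A by split; [exists 0 | exists t => s [/andP[_ ->]]].
have ubA := sup_upper_bound supA.
have s00 : 0 <= sup A by exact: ubA.
have below s : sup A < s <= t -> g s < c.
  case/andP=> As st; rewrite ltNge; apply/negP => cgs.
  have : s <= sup A by apply: ubA; rewrite /A /= st (le_trans s00 (ltW As)).
  by rewrite leNgt As.
(* Otherwise [g < c] near [sup A], and that neighbourhood meets [A]. *)
have gc : c <= g (sup A).
  move: s00; rewrite le_eqVlt => /orP[/eqP<- // | s0].
  rewrite leNgt; apply/negP => gsc.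
  move: (g_cont s0) => /cvgr_lt /(_ _ gsc) /nbhs_ballP[e /= e0 ball_lt].
  have [a Aa ae] := sup_adherent e0 supA.
  have : g a < c.
    apply: ball_lt; rewrite /ball /= ger0_norm ?subr_ge0 ?ubA //.
    by rewrite ltrBlDr addrC -ltrBlDr.
  by rewrite ltNge; case: Aa => _ ->.
have st : sup A <= t by apply: ge_sup; [exists 0 | move=> s [/andP[_ ->]]].
exists (sup A); split => //; rewrite s00 lt_neqAle st andbT.
by apply/eqP => eqt; move: gc; rewrite eqt leNgt gtc.
Qed.

Lemma barrier_ge (t : R) : 0 <= t -> c <= g 0 -> c <= g t.
Proof.
move=> t0 gc0; rewrite leNgt; apply/negP => gtc.
have [s0 [/andP[s00 s0t] gcs0 below]] := barrier_last_time t0 gc0 gtc.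
have : g s0 <= g t.
  apply: (@closed_cvg _ _ _ _ g [set y | y <= g t]) (g_cvg_right s00).
    exact: closed_le.
  near=> s.
  have s0s : s0 < s by near: s; exact: nbhs_right_gt.
  have st : s < t by near: s; exact: nbhs_right_lt.
  apply: barrier_nondecr; [exact: le_lt_trans s0s | exact: ltW |].
  by move=> u /andP[su ut]; rewrite below // ut (lt_le_trans s0s).
by rewrite leNgt (lt_le_trans gtc gcs0).
Unshelve. all: by end_near.
Qed.

End Barrier.

Section Utility.
Variables (R : realType) (n k : nat).
Implicit Types (m : 'I_n -> R) (v : 'M[R]_(n, k)).

Lemma winner_max_other_le m v i j :
  is_winner m v i j -> max_other m v i j <= Num.max 0 (bid m v i j).
Proof.
move/forallP=> win; apply: bigmax_le => [|s _]; first by rewrite le_max lexx.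
by rewrite le_max win orbT.
Qed.

Lemma realized_utility_ge0 m v i :
  m i <= 1 -> (forall a b, 0 <= v a b) -> 0 <= realized_utility m v i.
Proof.
move=> mi1 v0; apply: sumr_ge0 => j _.
rewrite /payment mulrC -mulrBr /alloc.
case: ifP => [win|_]; last by rewrite mul0r.
rewrite mulr_ge0 ?invr_ge0 ?ler0n // subr_ge0.
apply: le_trans (winner_max_other_le win) _.
by rewrite ge_max v0 /bid -[leRHS]mul1r ler_wpM2r.
Qed.

Definition in_box (M : R) v := forall a b, 0 <= v a b <= M.

Lemma in_box_upd_entry M v ab x :
  in_box M v -> 0 <= x <= M -> in_box M (upd_entry v ab x).
Proof. by move=> vB xB a b; rewrite mxE; case: ifP. Qed.

Lemma iter_integral_ge0 M s (F : 'M[R]_(n, k) -> R) v :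
  (forall w, in_box M w -> 0 <= F w) -> in_box M v -> 0 <= iter_integral M s F v.
Proof.
move=> F0; elim: s v => [|ab s IH] v vB /=; first exact: F0.
apply: Rintegral_ge0 => x; rewrite /= in_itv /= => xB.
exact/IH/in_box_upd_entry.
Qed.

Lemma exp_utility_ge0 (M : R) (f : 'M[R]_(n, k) -> R) m i :
  0 <= M -> positive_C1_density M f -> m i <= 1 -> 0 <= exp_utility M f m i.
Proof.
move=> M0 [fpos _ _ _] mi1; apply: iter_integral_ge0; last first.
  by move=> a b; rewrite mxE lexx M0.
move=> w wB; apply: mulr_ge0; last exact/ltW/fpos.
by apply: realized_utility_ge0 => // a b; case/andP: (wB a b).
Qed.

End Utility.

Theorem lemma2 (R : realType) (n k : nat) (M : R) (f : 'M[R]_(n, k) -> R)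
    (phi : R -> ('I_n -> R) -> ('I_n -> R)) :
  0 < M ->
  positive_C1_density M f ->
  (* phi is the (forward) flow of dm_i/dt = U_i(m) *)
  (forall x : 'I_n -> R, phi 0 x = x) ->
  (forall (x : 'I_n -> R) (i : 'I_n),
      (fun t => phi t x i) @ 0^'+ --> x i) ->
  (forall (x : 'I_n -> R) (i : 'I_n) (t : R), 0 < t ->
      derivable (fun s => phi s x i) t 1 /\
      derive1 (fun s => phi s x i) t = exp_utility M f (phi t x) i) ->
  forall t : R, 0 <= t -> phi t @` @ge1_orthant R n `<=` @ge1_orthant R n.
Proof.
move=> M0 fD phi0 phi_cvg0 phi_ode t t0 _ [x x1 <-] i.
have phi_derivable s : 0 < s -> derivable (fun u => phi u x i) s 1.
  by case/(phi_ode x i s).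
have phi_derive_ge0 s :
    0 < s -> phi s x i < 1 -> 0 <= derive1 (fun u => phi u x i) s.
  move=> s0 below; rewrite (proj2 (phi_ode x i s s0)).
  exact: exp_utility_ge0 (ltW M0) fD (ltW below).
have phi_cvg_right : (fun u => phi u x i) @ 0^'+ --> phi 0 x i.
  by rewrite phi0; exact: phi_cvg0.
by apply: (barrier_ge phi_cvg_right phi_derivable phi_derive_ge0 t0); rewrite phi0.
Qed.
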